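(* Let $\mathscr C$ be an extensive category, $(T,\mu,\eta)$ a consistent monad on $\mathscr C$, $F\colon\mathscr C\to\mathscr C$ a functor with extension $\bar F$ to $\mathcal{K}\ell(T)$, and $I$ an object; suppose $T$ and $F$ preserve finite intersections. Let $h\colon(D,d,i_D)\to G(C,c,i_C)$ be a morphism in $\mathrm{Coalg}_I(TF+T)$ that is a monomorphism in $\mathscr C$. Then there exists a morphism $g\colon(E,e,i_E)\to(C,c,i_C)$ in $\mathrm{Coalg}_I^{\mathsf p}(\bar F)$ such that $(D,d,i_D)=G(E,e,i_E)$ and $h=Gg$.
   Context: A category is extensive if it has finite coproducts and for all objects $A,B$ the canonical functor $\mathscr C/A\times\mathscr C/B\to\mathscr C/(A+B)$ is an equivalence. $\mathcal{K}\ell(T)$ is the Kleisli category (morphisms $X\to Y$ are $\mathscr C$-morphisms $X\to TY$, composition $g\circ f=\mu_Z\cdot Tg\cdot f$). $T$ consistent: every $\eta_X$ monic. Pure Kleisli morphisms are those of form $\eta_Y\cdot f$, identified with $\mathscr C$-morphisms $f$. $\bar F$ extends $F$: $\bar F(\eta\cdot f)=\eta\cdot Ff$ on pure morphisms and $\bar F X=FX$. Preserving finite intersections: preserving pullbacks of pairs of monomorphisms (and monomorphisms). $\mathrm{Coalg}_I^{\mathsf p}(\bar F)$: objects are $(C,c,i_C)$ with $c\colon C\to TFC$, $i_C\colon I\to TC$; morphisms are pure Kleisli morphisms $h$ with $\bar Fh\circ c=d\circ h$ and $h\circ i_C=i_D$. $\mathrm{Coalg}_I(TF+T)$: $I$-pointed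 coalgebras in $\mathscr C$ for $TF+T$. $G(C,c,i_C)$ is the coalgebra on $C+I$ with structure $(TF\mathsf{inl}+T\mathsf{inl})\cdot(c+i_C)$ and pointing $\mathsf{inr}\colon I\to C+I$; $G$ maps a pure homomorphism $h$ to $h+\mathrm{id}_I$. The equality $(D,d,i_D)=G(E,e,i_E)$ is up to isomorphism. *)

Set Implicit Arguments.
Unset Strict Implicit.

Record Category := {
  Ob :> Type;
  Hom : Ob -> Ob -> Type;
  idm : forall A, Hom A A;
  comp : forall A B C, Hom B C -> Hom A B -> Hom A C;
  comp_id_l : forall A B (f : Hom A B), comp (idm B) f = f;
  comp_id_r : forall A B (f : Hom A B), comp f (idm A) = f;
  comp_assoc : forall A B C D (f : Hom A B) (g : Hom B C) (h : Hom C D),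
      comp h (comp g f) = comp (comp h g) f
}.
Arguments Hom c _ _ : clear implicits.
Arguments idm {c} A.
Arguments comp {c A B C} _ _.

Section Basics.
Variable C : Category.

Definition mono {A B : C} (m : Hom C A B) : Prop :=
  forall Z (f g : Hom C Z A), comp m f = comp m g -> f = g.

Definition is_iso {A B : C} (f : Hom C A B) : Prop :=
  exists g : Hom C B A, comp g f = idm A /\ comp f g = idm B.

Definition is_pullback {A B X P : C} (m1 : Hom C A X) (m2 : Hom C B X)
  (p1 : Hom C P A) (p2 : Hom C P B) : Prop :=
  comp m1 p1 = comp m2 p2 /\
  forall Z (z1 : Hom C Z A) (z2 : Hom C Z B), comp m1 z1 = comp m2 z2 ->
    exists u : Hom C Z P, (comp p1 u = z1 /\ comp p2 u = z2) /\
      forall u' : Hom C Z P, comp p1 u' = z1 -> comp p2 u' = z2 -> u' = u.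
End Basics.

Record Functor (C D : Category) := {
  fobj :> C -> D;
  fmap : forall A B, Hom C A B -> Hom D (fobj A) (fobj B);
  fmap_id : forall A, fmap (idm A) = idm (fobj A);
  fmap_comp : forall A B E (f : Hom C A B) (g : Hom C B E),
      fmap (comp g f) = comp (fmap g) (fmap f)
}.
Arguments fmap {C D} f0 {A B} _.

Definition preserves_finite_intersections {C : Category} (F : Functor C C) : Prop :=
  (forall A B (m : Hom C A B), mono m -> mono (fmap F m)) /\
  (forall A B X P (m1 : Hom C A X) (m2 : Hom C B X) (p1 : Hom C P A) (p2 : Hom C P B),
      mono m1 -> mono m2 -> is_pullback m1 m2 p1 p2 ->
      is_pullback (fmap F m1) (fmap F m2) (fmap F p1) (fmap F p2)).

Record Monad (C : Category) := {
  mfun :> Functor C C;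
  eta : forall X : C, Hom C X (mfun X);
  mu : forall X : C, Hom C (mfun (mfun X)) (mfun X);
  eta_nat : forall X Y (f : Hom C X Y), comp (fmap mfun f) (eta X) = comp (eta Y) f;
  mu_nat : forall X Y (f : Hom C X Y),
      comp (fmap mfun f) (mu X) = comp (mu Y) (fmap mfun (fmap mfun f));
  mu_eta_l : forall X, comp (mu X) (eta (mfun X)) = idm (mfun X);
  mu_eta_r : forall X, comp (mu X) (fmap mfun (eta X)) = idm (mfun X);
  mu_assoc : forall X, comp (mu X) (fmap mfun (mu X)) = comp (mu X) (mu (mfun X))
}.
Arguments eta {C} m X.
Arguments mu {C} m X.

Definition consistent {C : Category} (T : Monad C) : Prop :=
  forall X : C, mono (eta T X).

Definition kcomp {C : Category} (T : Monad C) {X Y Z : C}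
  (g : Hom C Y (T Z)) (f : Hom C X (T Y)) : Hom C X (T Z) :=
  comp (mu T Z) (comp (fmap T g) f).
Arguments kcomp {C} T {X Y Z} g f.

Definition pure {C : Category} (T : Monad C) {X Y : C} (f : Hom C X Y) : Hom C X (T Y) :=
  comp (eta T Y) f.
Arguments pure {C} T {X Y} f.

Record KleisliExtension {C : Category} (T : Monad C) (F : Functor C C) := {
  Fbar : forall X Y : C, Hom C X (T Y) -> Hom C (F X) (T (F Y));
  Fbar_id : forall X : C, Fbar (eta T X) = eta T (F X);
  Fbar_comp : forall X Y Z (f : Hom C X (T Y)) (g : Hom C Y (T Z)),
      Fbar (kcomp T g f) = kcomp T (Fbar g) (Fbar f);
  Fbar_pure : forall X Y (f : Hom C X Y), Fbar (pure T f) = pure T (fmap F f)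
}.
Arguments Fbar {C T F} _ {X Y} _.

Record Coproducts (C : Category) := {
  init : C;
  init_map : forall X : C, Hom C init X;
  init_uniq : forall X (f : Hom C init X), f = init_map X;
  coprod : C -> C -> C;
  inl : forall A B : C, Hom C A (coprod A B);
  inr : forall A B : C, Hom C B (coprod A B);
  copair : forall A B X, Hom C A X -> Hom C B X -> Hom C (coprod A B) X;
  copair_inl : forall A B X (f : Hom C A X) (g : Hom C B X), comp (copair f g) (inl A B) = f;
  copair_inr : forall A B X (f : Hom C A X) (g : Hom C B X), comp (copair f g) (inr A B) = g;
  copair_uniq : forall A B X (f : Hom C A X) (g : Hom C B X) (u : Hom C (coprod A B) X),
      comp u (inl A B) = f -> comp u (inr A B) = g -> u = copair f g
}.
Arguments init {C} _.
Arguments coprod {C} _ _ _.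
Arguments inl {C} _ A B.
Arguments inr {C} _ A B.
Arguments copair {C} _ {A B X} _ _.

Definition cpmap {C : Category} (cp : Coproducts C) {A B A' B' : C}
  (f : Hom C A A') (g : Hom C B B') : Hom C (coprod cp A B) (coprod cp A' B') :=
  copair cp (comp (inl cp A' B') f) (comp (inr cp A' B') g).

(** Extensivity: for all A, B the canonical functor
      C/A x C/B -> C/(A+B),  ((X,a),(Y,b)) |-> (X+Y, a+b),  (p,q) |-> p+q
    is an equivalence, i.e. essentially surjective, full and faithful. *)
Definition Extensive {C : Category} (cp : Coproducts C) : Prop :=
  (forall (A B Z : C) (f : Hom C Z (coprod cp A B)),
     exists (X Y : C) (a : Hom C X A) (b : Hom C Y B) (phi : Hom C (coprod cp X Y) Z),
       is_iso phi /\ comp f phi = cpmap cp a b) /\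
  (forall (A B X Y X' Y' : C) (a : Hom C X A) (b : Hom C Y B)
          (a' : Hom C X' A) (b' : Hom C Y' B) (u : Hom C (coprod cp X Y) (coprod cp X' Y')),
     comp (cpmap cp a' b') u = cpmap cp a b ->
     exists (p : Hom C X X') (q : Hom C Y Y'),
       comp a' p = a /\ comp b' q = b /\ u = cpmap cp p q) /\
  (forall (A B X Y X' Y' : C) (a : Hom C X A) (b : Hom C Y B)
          (a' : Hom C X' A) (b' : Hom C Y' B) (p p' : Hom C X X') (q q' : Hom C Y Y'),
     comp a' p = a -> comp a' p' = a -> comp b' q = b -> comp b' q' = b ->
     cpmap cp p q = cpmap cp p' q' -> p = p' /\ q = q').

Section Coalg.
Variables (C : Category) (cp : Coproducts C) (T : Monad C) (F : Functor C C)
          (Fb : KleisliExtension T F) (I : C).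

(** Morphism in Coalg_I^p(Fbar) between (C1,c1,i1) and (C2,c2,i2):
    a pure Kleisli morphism h (identified with h : C1 -> C2 in C). *)
Definition pure_coalg_hom {C1 C2 : C}
  (c1 : Hom C C1 (T (F C1))) (i1 : Hom C I (T C1))
  (c2 : Hom C C2 (T (F C2))) (i2 : Hom C I (T C2)) (h : Hom C C1 C2) : Prop :=
  kcomp T (Fbar Fb (pure T h)) c1 = kcomp T c2 (pure T h) /\
  kcomp T (pure T h) i1 = i2.

Definition TFT (X : C) : C := coprod cp (T (F X)) (T X).
Definition TFTmap {X Y : C} (f : Hom C X Y) : Hom C (TFT X) (TFT Y) :=
  cpmap cp (fmap T (fmap F f)) (fmap T f).

Definition coalg_hom {D1 D2 : C}
  (d1 : Hom C D1 (TFT D1)) (j1 : Hom C I D1)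
  (d2 : Hom C D2 (TFT D2)) (j2 : Hom C I D2) (h : Hom C D1 D2) : Prop :=
  comp (TFTmap h) d1 = comp d2 h /\ comp h j1 = j2.

Definition coalg_iso {D1 D2 : C}
  (d1 : Hom C D1 (TFT D1)) (j1 : Hom C I D1)
  (d2 : Hom C D2 (TFT D2)) (j2 : Hom C I D2) (h : Hom C D1 D2) : Prop :=
  coalg_hom d1 j1 d2 j2 h /\
  exists k : Hom C D2 D1, coalg_hom d2 j2 d1 j1 k /\
    comp k h = idm D1 /\ comp h k = idm D2.

Definition G_obj (E : C) : C := coprod cp E I.
Definition G_str {E : C} (e : Hom C E (T (F E))) (iE : Hom C I (T E)) :
  Hom C (G_obj E) (TFT (G_obj E)) :=
  comp (cpmap cp (fmap T (fmap F (inl cp E I))) (fmap T (inl cp E I))) (cpmap cp e iE).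
Definition G_pt (E : C) : Hom C I (G_obj E) := inr cp E I.
Definition G_map {E E' : C} (g : Hom C E E') : Hom C (G_obj E) (G_obj E') :=
  cpmap cp g (idm I).
End Coalg.
Arguments pure_coalg_hom {C} T {F} Fb I {C1 C2} c1 i1 c2 i2 h.
Arguments TFT {C} cp T F X.
Arguments TFTmap {C} cp T F {X Y} f.
Arguments coalg_hom {C} cp T F I {D1 D2} d1 j1 d2 j2 h.
Arguments coalg_iso {C} cp T F I {D1 D2} d1 j1 d2 j2 h.
Arguments G_obj {C} cp I E.
Arguments G_str {C} cp T F I {E} e iE.
Arguments G_pt {C} cp I E.
Arguments G_map {C} cp I {E E'} g.


(* By extensivity the monomorphism [h : D -> C0 + I] splits [D] as [X + Y] over
   the two summands.  The point [iD] lands in [Y] and splits [b : Y -> I], which is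
   monic because [h] is, so [h = (a + id) . Phi] for an isomorphism [Phi].
   Transport [d] along [Phi]; as [a + id] is a homomorphism and coproducts are
   disjoint, the transported structure sends [X] into the [TF]-summand and [I]
   into the [T]-summand.  The square [(a + id) . inl = inl . a] is a pullback of
   monomorphisms, so its images under [TF] and [T] are pullbacks, and the two
   components factor as [TF inl . e] and [T inl . iE]: this is the required
   coalgebra [(X, e, iE)], with [g := a]. *)

Section Monos.
Context {C : Category}.

Lemma mono_comp {A B D : C} (f : Hom C B D) (g : Hom C A B) :
  mono f -> mono g -> mono (comp f g).
Proof.
  intros Hf Hg Z x y Hxy. apply Hg, Hf.
  rewrite !comp_assoc. exact Hxy.
Qed.

Lemma mono_of_comp {A B D : C} (f : Hom C B D) (g : Hom C A B) :
  mono (comp f g) -> mono g.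
Proof.
  intros Hfg Z x y Hxy. apply Hfg.
  rewrite <- !comp_assoc, Hxy. reflexivity.
Qed.

Lemma split_mono {A B : C} (m : Hom C A B) (r : Hom C B A) :
  comp r m = idm A -> mono m.
Proof.
  intros Hrm Z x y Hxy.
  rewrite <- (comp_id_l x), <- (comp_id_l y), <- Hrm, <- !comp_assoc, Hxy.
  reflexivity.
Qed.
End Monos.

Definition functor_comp {C : Category} (G H : Functor C C) : Functor C C.
Proof.
  refine {| fobj := fun X => G (H X); fmap := fun _ _ f => fmap G (fmap H f) |}.
  - intro A. rewrite !fmap_id. reflexivity.
  - intros A B E f g. rewrite !fmap_comp. reflexivity.
Defined.

Lemma preserves_finite_intersections_comp {C : Category} (G H : Functor C C) :
  preserves_finite_intersections G -> preserves_finite_intersections H ->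
  preserves_finite_intersections (functor_comp G H).
Proof.
  intros [G_mono G_pb] [H_mono H_pb]. split; simpl.
  - intros A B m Hm. apply G_mono, H_mono, Hm.
  - intros A B X P m1 m2 p1 p2 Hm1 Hm2 Hpb.
    apply G_pb; [apply H_mono; assumption | apply H_mono; assumption |].
    apply H_pb; assumption.
Qed.

Section Coproducts.
Context {C : Category} (cp : Coproducts C).

Lemma coprod_hom_ext {A B W : C} (u v : Hom C (coprod cp A B) W) :
  comp u (inl cp A B) = comp v (inl cp A B) ->
  comp u (inr cp A B) = comp v (inr cp A B) -> u = v.
Proof.
  intros Hl Hr. rewrite (copair_uniq Hl Hr). symmetry.
  apply copair_uniq; reflexivity.
Qed.

Lemma init_hom_ext {W : C} (f g : Hom C (init cp) W) : f = g.
Proof. rewrite (init_uniq f), (init_uniq g). reflexivity. Qed.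

Lemma cpmap_inl {A B A' B' : C} (f : Hom C A A') (g : Hom C B B') :
  comp (cpmap cp f g) (inl cp A B) = comp (inl cp A' B') f.
Proof. apply copair_inl. Qed.

Lemma cpmap_inr {A B A' B' : C} (f : Hom C A A') (g : Hom C B B') :
  comp (cpmap cp f g) (inr cp A B) = comp (inr cp A' B') g.
Proof. apply copair_inr. Qed.

Lemma cpmap_comp {A B A' B' A'' B'' : C} (f : Hom C A A') (g : Hom C B B')
  (f' : Hom C A' A'') (g' : Hom C B' B'') :
  comp (cpmap cp f' g') (cpmap cp f g) = cpmap cp (comp f' f) (comp g' g).
Proof.
  apply coprod_hom_ext.
  - rewrite <- comp_assoc, !cpmap_inl, comp_assoc, cpmap_inl, comp_assoc. reflexivity.
  - rewrite <- comp_assoc, !cpmap_inr, comp_assoc, cpmap_inr, comp_assoc. reflexivity.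
Qed.

Lemma cpmap_id {A B : C} : cpmap cp (idm A) (idm B) = idm (coprod cp A B).
Proof.
  apply coprod_hom_ext.
  - rewrite cpmap_inl, comp_id_l, comp_id_r. reflexivity.
  - rewrite cpmap_inr, comp_id_l, comp_id_r. reflexivity.
Qed.

End Coproducts.

Section Extensive.
Context {C : Category} (cp : Coproducts C).
Hypothesis ext : Extensive cp.

Lemma extensive_split {A B Z : C} (u : Hom C Z (coprod cp A B)) :
  exists (X Y : C) (a : Hom C X A) (b : Hom C Y B)
         (phi : Hom C (coprod cp X Y) Z) (psi : Hom C Z (coprod cp X Y)),
    comp psi phi = idm _ /\ comp phi psi = idm Z /\ u = comp (cpmap cp a b) psi.
Proof.
  destruct ext as [split _].
  destruct (split A B Z u) as (X & Y & a & b & phi & [psi [Hpsi Hphi]] & Hu).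
  exists X, Y, a, b, phi, psi. do 2 (split; [assumption |]).
  rewrite <- Hu, <- comp_assoc, Hphi, comp_id_r. reflexivity.
Qed.

Lemma extensive_full {A B X Y X' Y' : C} (a : Hom C X A) (b : Hom C Y B)
  (a' : Hom C X' A) (b' : Hom C Y' B) (u : Hom C (coprod cp X Y) (coprod cp X' Y')) :
  comp (cpmap cp a' b') u = cpmap cp a b ->
  exists (p : Hom C X X') (q : Hom C Y Y'),
    comp a' p = a /\ comp b' q = b /\ u = cpmap cp p q.
Proof. destruct ext as [_ [full _]]. apply full. Qed.

(* Splitting [[inl, inl] : Z + Z -> Z + 0] over [p + p] exhibits [inl] as
   [inr . q] for some [q : Z -> 0], so [id_Z] factors through [0]. *)
Lemma init_strict {Z W : C} (p : Hom C Z (init cp)) (f g : Hom C Z W) : f = g.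
Proof.
  set (u := copair cp (inl cp Z (init cp)) (inl cp Z (init cp))).
  destruct (extensive_full p p p (idm _) u) as (p' & q & _ & _ & Hu).
  { apply (coprod_hom_ext cp).
    - rewrite <- comp_assoc. unfold u. rewrite copair_inl, !cpmap_inl. reflexivity.
    - rewrite <- comp_assoc. unfold u. rewrite copair_inr, cpmap_inl, cpmap_inr.
      rewrite (init_hom_ext cp (inl cp _ _) (inr cp _ _)). reflexivity. }
  assert (Hq : comp (inr cp Z (init cp)) q = inl cp Z (init cp)).
  { rewrite <- (cpmap_inr cp p'), <- Hu. apply copair_inr. }
  assert (Hid : comp (init_map cp Z) q = idm Z).
  { rewrite <- (copair_inr cp (idm Z) (init_map cp Z)), <- comp_assoc, Hq.
    apply copair_inl. }
  rewrite <- (comp_id_r f), <- (comp_id_r g), <- Hid, !comp_assoc.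
  rewrite (init_hom_ext cp (comp f (init_map cp Z)) (comp g (init_map cp Z))). reflexivity.
Qed.

Lemma coprod_disjoint {Z A B : C} (x : Hom C Z A) (y : Hom C Z B) :
  comp (inl cp A B) x = comp (inr cp A B) y -> inhabited (Hom C Z (init cp)).
Proof.
  intro Hxy.
  destruct (extensive_full x (init_map cp B) (init_map cp A) y
              (copair cp (inr cp (init cp) Z) (init_map cp _))) as (p & _).
  { apply (coprod_hom_ext cp).
    - rewrite <- comp_assoc, copair_inl, cpmap_inr, cpmap_inl. symmetry. exact Hxy.
    - apply (init_hom_ext cp). }
  exact (inhabits p).
Qed.

Lemma inl_mono {A B : C} : mono (inl cp A B).
Proof.
  intros Z f g Hfg.
  destruct (extensive_full f (init_map cp B) g (init_map cp B) (idm _))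
    as (p & q & Hp & _ & Hu).
  { rewrite comp_id_r. apply (coprod_hom_ext cp).
    - rewrite !cpmap_inl. symmetry. exact Hfg.
    - apply (init_hom_ext cp). }
  assert (Hp1 : p = idm Z).
  { apply (split_mono _ _ (copair_inl cp (idm Z) (init_map cp Z))).
    rewrite <- (cpmap_inl cp p q), <- Hu, comp_id_l, comp_id_r. reflexivity. }
  rewrite <- Hp, Hp1, comp_id_r. reflexivity.
Qed.

Lemma inr_mono {A B : C} : mono (inr cp A B).
Proof.
  intros Z f g Hfg.
  destruct (extensive_full (init_map cp A) f (init_map cp A) g (idm _))
    as (p & q & _ & Hq & Hu).
  { rewrite comp_id_r. apply (coprod_hom_ext cp).
    - apply (init_hom_ext cp).
    - rewrite !cpmap_inr. symmetry. exact Hfg. }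
  assert (Hq1 : q = idm Z).
  { apply (split_mono _ _ (copair_inr cp (init_map cp Z) (idm Z))).
    rewrite <- (cpmap_inr cp p q), <- Hu, comp_id_l, comp_id_r. reflexivity. }
  rewrite <- Hq, Hq1, comp_id_r. reflexivity.
Qed.

Lemma cpmap_preimage_inl {Z A B A' B' : C} (u : Hom C Z (coprod cp A B))
  (f : Hom C A A') (g : Hom C B B') (w : Hom C Z A') :
  comp (cpmap cp f g) u = comp (inl cp A' B') w ->
  exists v : Hom C Z A, u = comp (inl cp A B) v /\ comp f v = w.
Proof.
  intro Hu.
  destruct (extensive_split u) as (X & Y & a & b & phi & psi & Hpsi & _ & Hu_ab).
  assert (Hu_phi : comp u phi = cpmap cp a b).
  { rewrite Hu_ab, <- comp_assoc, Hpsi, comp_id_r. reflexivity. }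
  assert (HY : comp (inl cp A' B') (comp w (comp phi (inr cp X Y)))
             = comp (inr cp A' B') (comp g b)).
  { rewrite comp_assoc, <- Hu, <- comp_assoc, (comp_assoc _ phi u), Hu_phi.
    rewrite cpmap_inr, comp_assoc, cpmap_inr, comp_assoc. reflexivity. }
  destruct (coprod_disjoint _ _ HY) as [p].
  exists (comp (copair cp a (comp (init_map cp A) p)) psi).
  assert (Hv : u = comp (inl cp A B) (comp (copair cp a (comp (init_map cp A) p)) psi)).
  { rewrite Hu_ab, comp_assoc. f_equal. apply (coprod_hom_ext cp).
    - rewrite cpmap_inl, <- comp_assoc, copair_inl. reflexivity.
    - apply (init_strict p). }
  split; [exact Hv |].
  apply (inl_mono (B := B')).
  rewrite <- Hu, Hv, !comp_assoc, cpmap_inl. reflexivity.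
Qed.

Lemma cpmap_preimage_inr {Z A B A' B' : C} (u : Hom C Z (coprod cp A B))
  (f : Hom C A A') (g : Hom C B B') (w : Hom C Z B') :
  comp (cpmap cp f g) u = comp (inr cp A' B') w ->
  exists v : Hom C Z B, u = comp (inr cp A B) v /\ comp g v = w.
Proof.
  intro Hu.
  destruct (extensive_split u) as (X & Y & a & b & phi & psi & Hpsi & _ & Hu_ab).
  assert (Hu_phi : comp u phi = cpmap cp a b).
  { rewrite Hu_ab, <- comp_assoc, Hpsi, comp_id_r. reflexivity. }
  assert (HX : comp (inl cp A' B') (comp f a)
             = comp (inr cp A' B') (comp w (comp phi (inl cp X Y)))).
  { symmetry. rewrite comp_assoc, <- Hu, <- comp_assoc, (comp_assoc _ phi u), Hu_phi.
    rewrite cpmap_inl, comp_assoc, cpmap_inl, comp_assoc. reflexivity. }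
  destruct (coprod_disjoint _ _ HX) as [p].
  exists (comp (copair cp (comp (init_map cp B) p) b) psi).
  assert (Hv : u = comp (inr cp A B) (comp (copair cp (comp (init_map cp B) p) b) psi)).
  { rewrite Hu_ab, comp_assoc. f_equal. apply (coprod_hom_ext cp).
    - apply (init_strict p).
    - rewrite cpmap_inr, <- comp_assoc, copair_inr. reflexivity. }
  split; [exact Hv |].
  apply (inr_mono (A := A')).
  rewrite <- Hu, Hv, !comp_assoc, cpmap_inr. reflexivity.
Qed.

Lemma cpmap_inl_pullback {X A B B' : C} (a : Hom C X A) (g : Hom C B B') :
  is_pullback (cpmap cp a g) (inl cp A B') (inl cp X B) a.
Proof.
  split; [apply cpmap_inl |].
  intros Z z1 z2 Hz.
  destruct (cpmap_preimage_inl z1 a g z2 Hz) as (v & Hv & Hav).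
  exists v. split; [split; [symmetry; exact Hv | exact Hav] |].
  intros v' Hv' _. apply (inl_mono (B := B)). rewrite Hv', Hv. reflexivity.
Qed.

Lemma pointed_mono_decomposition {A B D : C} (h : Hom C D (coprod cp A B))
  (j : Hom C B D) :
  mono h -> comp h j = inr cp A B ->
  exists (X : C) (a : Hom C X A) (Phi : Hom C D (coprod cp X B))
         (Psi : Hom C (coprod cp X B) D),
    comp Psi Phi = idm D /\ comp Phi Psi = idm _ /\
    h = comp (cpmap cp a (idm B)) Phi.
Proof.
  intros Hh Hj.
  destruct (extensive_split h) as (X & Y & a & b & phi & psi & Hpsi & Hphi & Hh_ab).
  assert (Hb : mono b).
  { apply (mono_of_comp (inr cp A B)).
    rewrite <- (cpmap_inr cp a b).
    apply mono_comp; [| apply inr_mono].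
    replace (cpmap cp a b) with (comp h phi)
      by (rewrite Hh_ab, <- comp_assoc, Hpsi, comp_id_r; reflexivity).
    exact (mono_comp _ _ Hh (split_mono _ _ Hpsi)). }
  (* The point [j] lands in the [Y]-summand and splits [b]. *)
  destruct (cpmap_preimage_inr (comp psi j) a b (idm B)) as (q & _ & Hbq).
  { rewrite comp_assoc, <- Hh_ab, Hj, comp_id_r. reflexivity. }
  assert (Hqb : comp q b = idm Y).
  { apply Hb. rewrite comp_assoc, Hbq, comp_id_l, comp_id_r. reflexivity. }
  exists X, a, (comp (cpmap cp (idm X) b) psi), (comp phi (cpmap cp (idm X) q)).
  split; [| split].
  - rewrite <- comp_assoc, (comp_assoc psi), cpmap_comp, Hqb, comp_id_l, cpmap_id, comp_id_l.
    exact Hphi.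
  - rewrite <- comp_assoc, (comp_assoc _ phi psi), Hpsi, comp_id_l, cpmap_comp, Hbq, comp_id_l.
    apply cpmap_id.
  - rewrite comp_assoc, cpmap_comp, comp_id_l, comp_id_r. exact Hh_ab.
Qed.

Lemma preserved_cpmap_inl_pullback (P : Functor C C) (HP : preserves_finite_intersections P)
  {X A B B' : C} (a : Hom C X A) (g : Hom C B B') :
  mono (cpmap cp a g) ->
  is_pullback (fmap P (cpmap cp a g)) (fmap P (inl cp A B')) (fmap P (inl cp X B)) (fmap P a).
Proof.
  destruct HP as [_ HP_pb]. intro Hm.
  apply HP_pb; [exact Hm | apply inl_mono | apply cpmap_inl_pullback].
Qed.
End Extensive.

Section Coalgebras.
Context {C : Category} (cp : Coproducts C) (T : Monad C) (F : Functor C C) (I : C).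

Lemma TFTmap_comp {X Y Z : C} (f : Hom C X Y) (g : Hom C Y Z) :
  TFTmap cp T F (comp g f) = comp (TFTmap cp T F g) (TFTmap cp T F f).
Proof. unfold TFTmap, TFT. rewrite cpmap_comp, !fmap_comp. reflexivity. Qed.

Lemma coalg_hom_comp {D1 D2 D3 : C} (d1 : Hom C D1 (TFT cp T F D1)) (j1 : Hom C I D1)
  (d2 : Hom C D2 (TFT cp T F D2)) (j2 : Hom C I D2)
  (d3 : Hom C D3 (TFT cp T F D3)) (j3 : Hom C I D3)
  (f : Hom C D1 D2) (g : Hom C D2 D3) :
  coalg_hom cp T F I d1 j1 d2 j2 f -> coalg_hom cp T F I d2 j2 d3 j3 g ->
  coalg_hom cp T F I d1 j1 d3 j3 (comp g f).
Proof.
  intros [Hf Hfj] [Hg Hgj]. split.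
  - rewrite TFTmap_comp, <- comp_assoc, Hf, comp_assoc, Hg, comp_assoc. reflexivity.
  - rewrite <- comp_assoc, Hfj. exact Hgj.
Qed.

Lemma coalg_hom_transport {D D' : C} (d : Hom C D (TFT cp T F D)) (j : Hom C I D)
  (Phi : Hom C D D') (Psi : Hom C D' D) :
  comp Psi Phi = idm D -> comp Phi Psi = idm D' ->
  let d' := comp (TFTmap cp T F Phi) (comp d Psi) in
  coalg_hom cp T F I d j d' (comp Phi j) Phi /\
  coalg_hom cp T F I d' (comp Phi j) d j Psi.
Proof.
  intros HPsiPhi HPhiPsi d'. unfold d'. split; split.
  - rewrite <- !comp_assoc, HPsiPhi, comp_id_r. reflexivity.
  - reflexivity.
  - rewrite !comp_assoc, <- TFTmap_comp, HPsiPhi.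
    unfold TFTmap, TFT. rewrite !fmap_id, cpmap_id, comp_id_l. reflexivity.
  - rewrite comp_assoc, HPsiPhi, comp_id_l. reflexivity.
Qed.

Lemma G_map_inl {E E' : C} (g : Hom C E E') :
  comp (G_map cp I g) (inl cp E I) = comp (inl cp E' I : Hom C E' (G_obj cp I E')) g.
Proof. apply cpmap_inl. Qed.

Lemma G_map_inr {E E' : C} (g : Hom C E E') :
  comp (G_map cp I g) (inr cp E I) = inr cp E' I.
Proof. rewrite <- comp_id_r. apply cpmap_inr. Qed.

Lemma G_str_inl {E : C} (e : Hom C E (T (F E))) (iE : Hom C I (T E)) :
  comp (G_str cp T F I e iE) (inl cp E I)
  = comp (inl cp _ _) (comp (fmap T (fmap F (inl cp E I))) e).
Proof.
  unfold G_str. rewrite <- comp_assoc, cpmap_inl, comp_assoc, cpmap_inl, comp_assoc.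
  reflexivity.
Qed.

Lemma G_str_inr {E : C} (e : Hom C E (T (F E))) (iE : Hom C I (T E)) :
  comp (G_str cp T F I e iE) (inr cp E I)
  = comp (inr cp _ _) (comp (fmap T (inl cp E I)) iE).
Proof.
  unfold G_str. rewrite <- comp_assoc, cpmap_inr, comp_assoc, cpmap_inr, comp_assoc.
  reflexivity.
Qed.

Lemma kcomp_pure_l {X Y Z : C} (f : Hom C Y Z) (x : Hom C X (T Y)) :
  kcomp T (pure T f) x = comp (fmap T f) x.
Proof.
  unfold kcomp, pure. rewrite fmap_comp, <- comp_assoc, comp_assoc, mu_eta_r, comp_id_l.
  reflexivity.
Qed.

Lemma kcomp_pure_r {X Y Z : C} (y : Hom C Y (T Z)) (f : Hom C X Y) :
  kcomp T y (pure T f) = comp y f.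
Proof.
  unfold kcomp, pure. rewrite (comp_assoc f), eta_nat, <- comp_assoc, comp_assoc, mu_eta_l.
  apply comp_id_l.
Qed.

Lemma pure_coalg_hom_iff (Fb : KleisliExtension T F) {C1 C2 : C}
  (c1 : Hom C C1 (T (F C1))) (i1 : Hom C I (T C1))
  (c2 : Hom C C2 (T (F C2))) (i2 : Hom C I (T C2)) (g : Hom C C1 C2) :
  pure_coalg_hom T Fb I c1 i1 c2 i2 g <->
  comp (fmap T (fmap F g)) c1 = comp c2 g /\ comp (fmap T g) i1 = i2.
Proof.
  unfold pure_coalg_hom. rewrite Fbar_pure, !kcomp_pure_l, kcomp_pure_r. tauto.
Qed.
End Coalgebras.

Lemma lift_G_str {C : Category} (cp : Coproducts C) (ext : Extensive cp)
  (T : Monad C) (F : Functor C C) (I : C)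
  (HT : preserves_finite_intersections T) (HF : preserves_finite_intersections F)
  {X C0 : C} (a : Hom C X C0) (c : Hom C C0 (T (F C0))) (iC : Hom C I (T C0))
  (d : Hom C (G_obj cp I X) (TFT cp T F (G_obj cp I X))) :
  mono (G_map cp I a) ->
  comp (TFTmap cp T F (G_map cp I a)) d = comp (G_str cp T F I c iC) (G_map cp I a) ->
  exists (e : Hom C X (T (F X))) (iE : Hom C I (T X)),
    d = G_str cp T F I e iE /\
    comp (fmap T (fmap F a)) e = comp c a /\ comp (fmap T a) iE = iC.
Proof.
  intros Ha Hd.
  assert (Hd_inl : comp (TFTmap cp T F (G_map cp I a)) (comp d (inl cp X I))
                 = comp (inl cp _ _) (comp (fmap T (fmap F (inl cp C0 I))) (comp c a))).
  { rewrite comp_assoc, Hd, <- comp_assoc, G_map_inl, comp_assoc, G_str_inl.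
    rewrite <- !comp_assoc. reflexivity. }
  assert (Hd_inr : comp (TFTmap cp T F (G_map cp I a)) (comp d (inr cp X I))
                 = comp (inr cp _ _) (comp (fmap T (inl cp C0 I)) iC)).
  { rewrite comp_assoc, Hd, <- comp_assoc, G_map_inr, G_str_inr. reflexivity. }
  destruct (cpmap_preimage_inl cp ext _ _ _ _ Hd_inl) as (v1 & Hv1 & Hav1).
  destruct (cpmap_preimage_inr cp ext _ _ _ _ Hd_inr) as (v2 & Hv2 & Hav2).
  pose proof (preserves_finite_intersections_comp T F HT HF) as HTF.
  destruct (proj2 (preserved_cpmap_inl_pullback cp ext _ HTF a (idm I) Ha) X v1 (comp c a) Hav1)
    as (e & [He_inl He_a] & _).
  destruct (proj2 (preserved_cpmap_inl_pullback cp ext T HT a (idm I) Ha) I v2 iC Hav2)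
    as (iE & [HiE_inl HiE_a] & _).
  exists e, iE. split; [| split; assumption].
  apply (coprod_hom_ext cp).
  - etransitivity; [exact Hv1 |]. rewrite <- He_inl. symmetry. apply G_str_inl.
  - etransitivity; [exact Hv2 |]. rewrite <- HiE_inl. symmetry. apply G_str_inr.
Qed.

Theorem lemma6p11 (C : Category) (cp : Coproducts C) (ext : Extensive cp)
  (T : Monad C) (Tcons : consistent T) (F : Functor C C) (Fb : KleisliExtension T F)
  (I : C) (HT : preserves_finite_intersections T) (HF : preserves_finite_intersections F)
  (D : C) (d : Hom C D (TFT cp T F D)) (iD : Hom C I D)
  (C0 : C) (c : Hom C C0 (T (F C0))) (iC : Hom C I (T C0))
  (h : Hom C D (G_obj cp I C0))
  (hhom : coalg_hom cp T F I d iD (G_str cp T F I c iC) (G_pt cp I C0) h)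
  (hmono : mono h) :
  exists (E : C) (e : Hom C E (T (F E))) (iE : Hom C I (T E)) (g : Hom C E C0),
    pure_coalg_hom T Fb I e iE c iC g /\
    exists phi : Hom C D (G_obj cp I E),
      coalg_iso cp T F I d iD (G_str cp T F I e iE) (G_pt cp I E) phi /\
      h = comp (G_map cp I g) phi.
Proof.
  destruct (pointed_mono_decomposition cp ext h iD hmono (proj2 hhom))
    as (X & a & Phi & Psi & HPsiPhi & HPhiPsi & Hh).
  destruct (coalg_hom_transport cp T F I d iD Phi Psi HPsiPhi HPhiPsi) as [HPhi HPsi].
  assert (Hk : comp h Psi = G_map cp I a).
  { rewrite Hh, <- comp_assoc, HPhiPsi, comp_id_r. reflexivity. }
  assert (Ha : mono (G_map cp I a)).
  { rewrite <- Hk. exact (mono_comp _ _ hmono (split_mono _ _ HPhiPsi)). }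
  pose proof (coalg_hom_comp cp T F I _ _ _ _ _ _ _ _ HPsi hhom) as [Hd' Hpt].
  rewrite Hk in Hd', Hpt.
  assert (HiD : comp Phi iD = G_pt cp I X).
  { apply Ha. etransitivity; [exact Hpt |]. symmetry. apply G_map_inr. }
  destruct (lift_G_str cp ext T F I HT HF a c iC _ Ha Hd') as (e & iE & He & Hae & HaiE).
  exists X, e, iE, a. split; [apply pure_coalg_hom_iff; split; assumption |].
  exists Phi. rewrite <- He, <- HiD. split; [| exact Hh].
  split; [exact HPhi |]. exists Psi. auto.
Qed.
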